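(* Let $k\ge2$, $n=2^k-1$, and let $C$ be the binary simplex $(n,k)$ code. For every correctable erasure pattern with at least one erased node, there exists an erased node that allows for easy repair.
   Context: The binary simplex $(n,k)$ code has generator matrix $G\in\mathbb F_2^{k\times n}$ whose columns $g_1,\dots,g_n$ are all the distinct nonzero vectors of $\mathbb F_2^k$. Nodes are the coordinates $c_1,\dots,c_n$ of codewords $c=uG$. An erasure pattern is a set $S^e\subseteq\{1,\dots,n\}$ of erased nodes; the other nodes are live. The pattern is correctable if no two distinct codewords coincide on all live positions. A node $c_i$ is related to distinct nodes $c_{j_1},\dots,c_{j_\gamma}$ (all different from $c_i$) if $g_i=g_{j_1}+\dots+g_{j_\gamma}$. An erased node allows for easy repair if it is related to $\gamma\le 2$ nodes which are all live. *)

From mathcomp Require Import all_boot all_order all_algebra.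
Set Implicit Arguments. Unset Strict Implicit. Unset Printing Implicit Defensive.
Import GRing.Theory.
Local Open Scope ring_scope.

(* Binary linear code with generator matrix G : 'M['F_2]_(k, n);
   codewords are c = u *m G for u : 'rV_k; node i is the coordinate c_i,
   with generator column g_i = col i G. *)

(* G is a generator matrix of the binary simplex (2^k-1, k) code:
   its columns are pairwise distinct and nonzero (with n = 2^k - 1 they are
   then exactly all nonzero vectors of F_2^k). *)
Definition simplex_generator (k : nat) (G : 'M['F_2]_(k, 2 ^ k - 1)) : Prop :=
  (forall i, col i G != 0) /\ injective (fun i => col i G).

Definition correctable (k n : nat) (G : 'M['F_2]_(k, n)) (S : {set 'I_n}) : Prop :=
  forall u v : 'rV['F_2]_k,
    (forall i, i \notin S -> (u *m G) 0 i = (v *m G) 0 i) ->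
    u *m G = v *m G.

Definition related (k n : nat) (G : 'M['F_2]_(k, n)) (i : 'I_n) (J : {set 'I_n}) : Prop :=
  i \notin J /\ col i G = \sum_(j in J) col j G.

Definition easy_repair (k n : nat) (G : 'M['F_2]_(k, n)) (S : {set 'I_n}) (i : 'I_n) : Prop :=
  i \in S /\
  exists J : {set 'I_n}, [/\ (0 < #|J|)%N, (#|J| <= 2)%N, [disjoint J & S] & related G i J].

(* If no erased node allows easy repair, then the live generator columns
   together with 0 are closed under addition: the sum of two distinct live
   columns is a nonzero vector, hence some column, and that column cannot be
   erased since it would then be related to two live nodes. Correctability
   says the live columns span F_2^k, so every column, in particular an erased
   one, would be live or zero, which is absurd. *)
From Stdlib Require Import Classical.
From mathcomp Require Import all_boot all_order all_algebra.

Set Implicit Arguments. Unset Strict Implicit. Unset Printing Implicit Defensive.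
Import GRing.Theory.
Local Open Scope ring_scope.

Lemma F2_eq01 (x : 'F_2) : x = 0 \/ x = 1.
Proof. by case: x => [[|[|m]] //= lt_x2]; [left | right]; apply: val_inj. Qed.

Lemma addmx_F2 m n (M : 'M['F_2]_(m, n)) : M + M = 0.
Proof. by apply/matrixP => i j; rewrite !mxE addrr_pchar2 // pchar_Fp. Qed.

Lemma oppmx_F2 m n (M : 'M['F_2]_(m, n)) : - M = M.
Proof. by apply/matrixP => i j; rewrite !mxE oppr_pchar2 // pchar_Fp. Qed.

Section SimplexCode.

Variables (k : nat) (G : 'M['F_2]_(k, 2 ^ k - 1)).
Hypothesis hG : simplex_generator G.

Lemma simplex_col_surj (g : 'cV['F_2]_k) : g != 0 -> exists i, col i G = g.
Proof.
case: hG => col_neq0 col_inj g_neq0.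
have sub_cols : [set col i G | i in 'I_(2 ^ k - 1)] \subset [set~ 0].
  by apply/subsetP => _ /imsetP[i _ ->]; rewrite !inE col_neq0.
have card_cols : #|[set col i G | i in 'I_(2 ^ k - 1)]| = #|[set~ (0 : 'cV['F_2]_k)]|.
  by rewrite cardsC1 card_mx card_Fp // muln1 card_imset // card_ord subn1.
have /imsetP[i _ ->] : g \in [set col i G | i in 'I_(2 ^ k - 1)].
  by rewrite ((subset_cardP card_cols sub_cols) g) !inE.
by exists i.
Qed.

Lemma simplex_row_free : row_free G.
Proof.
apply: inj_row_free => v vG0; apply/rowP => j; rewrite mxE.
have ej_neq0 : delta_mx j 0 != 0 :> 'cV['F_2]_k.
  by apply/negP => /eqP/matrixP/(_ j 0); rewrite !mxE !eqxx; apply/eqP; rewrite oner_eq0.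
have [i Gi] := simplex_col_surj ej_neq0.
have := congr1 (mulmx^~ (delta_mx i (0 : 'I_1))) vG0 => /=.
by rewrite mul0mx -mulmxA -colE Gi -colE => /colP/(_ 0); rewrite !mxE.
Qed.

Variable S : {set 'I_(2 ^ k - 1)}.

Definition live_part : 'M['F_2]_(k, 2 ^ k - 1) :=
  \matrix_(r, i) if i \in S then 0 else G r i.

Lemma col_live_part i : col i live_part = if i \in S then 0 else col i G.
Proof. by apply/colP => r; rewrite !mxE; case: (i \in S); rewrite ?mxE. Qed.

Hypothesis hcorr : correctable G S.

Lemma correctable_live_part_row_free : row_free live_part.
Proof.
apply: inj_row_free => v vA0; apply/eqP; rewrite -(mulmx_free_eq0 _ simplex_row_free).
apply/eqP; rewrite (@hcorr v 0) ?mul0mx // => i iS.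
have := congr1 (mulmx^~ (delta_mx i (0 : 'I_1))) vA0 => /=.
rewrite mul0mx -!mulmxA -!colE col_live_part (negPf iS).
by rewrite colE mulmxA -colE => /colP/(_ 0); rewrite !mxE.
Qed.

Lemma correctable_live_span (g : 'cV['F_2]_k) :
  exists2 L : {set 'I_(2 ^ k - 1)}, [disjoint L & S] & g = \sum_(j in L) col j G.
Proof.
have full : row_full live_part^T.
  by rewrite /row_full mxrank_tr; apply: correctable_live_part_row_free.
have /submxP[D gD] := submx_full g^T full.
exists [set i | (i \notin S) && (D 0 i == 1)].
  by rewrite disjoint_subset; apply/subsetP => i; rewrite !inE => /andP[].
apply/colP => r; rewrite summxE big_mkcond.
have := congr1 (fun M : 'rV_k => M 0 r) gD; rewrite !mxE => ->.
apply: eq_bigr => i _; rewrite !mxE inE.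
case: (i \in S) => /=; first by rewrite mulr0.
by case: (F2_eq01 (D 0 i)) => ->; rewrite ?mul0r ?mul1r.
Qed.

Section NoEasyRepair.

Hypothesis no_easy_repair : forall i, i \in S -> ~ easy_repair G S i.

Lemma live_pair_sum j1 j2 : j1 \notin S -> j2 \notin S -> j1 != j2 ->
  exists2 i, i \notin S & col i G = col j1 G + col j2 G.
Proof.
move=> j1S j2S j12; case: hG => _ col_inj.
have sum_neq0 : col j1 G + col j2 G != 0.
  by rewrite addr_eq0 oppmx_F2; apply: contra j12 => /eqP/col_inj->.
have [i Gi] := simplex_col_surj sum_neq0.
exists i => //; apply/negP => iS; apply: (no_easy_repair iS); split=> //.
have J_live : [disjoint [set j1; j2] & S].
  by rewrite disjoint_subset; apply/subsetP => x; rewrite !inE => /orP[] /eqP->.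
exists [set j1; j2]; split=> //; try by rewrite cards2 j12.
split; first by rewrite (disjointFl J_live iS).
by rewrite big_setU1 ?big_set1 ?inE.
Qed.

Lemma live_subset_sum (L : {set 'I_(2 ^ k - 1)}) : [disjoint L & S] ->
  \sum_(j in L) col j G = 0 \/
  exists2 i, i \notin S & \sum_(j in L) col j G = col i G.
Proof.
move=> LS.
pose live_or_0 g := (g == 0) || [exists i, (i \notin S) && (col i G == g)].
have live_col j : j \notin S -> live_or_0 (col j G).
  by move=> jS; apply/orP; right; apply/existsP; exists j; rewrite jS eqxx.
suff /orP[/eqP | /existsP[i /andP[iS /eqP]]] : live_or_0 (\sum_(j in L) col j G).
- by left.
- by right; exists i.
apply: (big_ind live_or_0) => [| x y | j jL]; first by rewrite /live_or_0 eqxx.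
- move=> /orP[/eqP-> | /existsP[j1 /andP[j1S /eqP<-]]]; first by rewrite add0r.
  move=> /orP[/eqP-> | /existsP[j2 /andP[j2S /eqP<-]]]; first by rewrite addr0 live_col.
  have [<- | j12] := eqVneq j1 j2; first by rewrite addmx_F2 /live_or_0 eqxx.
  by have [i iS <-] := live_pair_sum j1S j2S j12; apply: live_col.
- by apply: live_col; rewrite (disjointFr LS jL).
Qed.

End NoEasyRepair.

End SimplexCode.

Local Close Scope ring_scope.

Theorem lemma3p3 (k : nat) (hk : 2 <= k) (G : 'M['F_2]_(k, 2 ^ k - 1))
  (hG : simplex_generator G) (S : {set 'I_(2 ^ k - 1)})
  (hS : S != set0) (hcorr : correctable G S) :
  exists i, i \in S /\ easy_repair G S i.
Proof.
apply: NNPP => no_repair.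
have no_easy_repair i : i \in S -> ~ easy_repair G S i.
  by move=> iS repair; apply: no_repair; exists i.
have /set0Pn[i0 i0S] := hS.
have [L LS Li0] := correctable_live_span hG hcorr (col i0 G).
case: (hG) => col_neq0 col_inj.
have [| [i iS]] := live_subset_sum hG no_easy_repair LS; rewrite -Li0.
- by apply/eqP; rewrite col_neq0.
- by move/col_inj => ei; rewrite -ei i0S in iS.
Qed.
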